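(* Let $(M,d)$ be a bounded metric space such that the family $\mathcal{A}(M)$ of admissible subsets of $M$ is compact and has normal structure, and let $T: M\to M$ be a mapping which diminishes the radius of invariant admissible subsets of $M$. Then $T$ has a fixed point in $M$.
   Context: For $x\in M$ and $K\subseteq M$: $r_x(K)=\sup\{d(x,y):y\in K\}$, $r(K)=\inf\{r_x(K):x\in K\}$, $\delta(K)=\sup\{d(x,y):x,y\in K\}$. A bounded subset $K\subseteq M$ is admissible if it equals the intersection of all closed balls of $M$ containing it; $\mathcal{A}(M)$ denotes the family of admissible subsets. $\mathcal{A}(M)$ is compact if every descending chain of nonempty elements of $\mathcal{A}(M)$ has nonempty intersection. $\mathcal{A}(M)$ has normal structure if $r(K)<\delta(K)$ for every $K\in\mathcal{A}(M)$ with $\delta(K)>0$. $T$ diminishes the radius of invariant admissible subsets if for every $A\in\mathcal{A}(M)$ with $T(A)\subseteq A$, $r_{Tx}(T(A))\le r_x(A)$ for every $x\in M$. *)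

From HB Require Import structures.
From mathcomp Require Import all_boot all_order all_algebra.
From mathcomp Require Import boolp classical_sets reals.
Set Implicit Arguments. Unset Strict Implicit. Unset Printing Implicit Defensive.
Import Order.TTheory GRing.Theory Num.Theory.
Local Open Scope classical_set_scope.
Local Open Scope ring_scope.

Section MetricDefs.
Variables (R : realType) (M : Type) (d : M -> M -> R).

Definition is_metric : Prop :=
  [/\ forall x y, 0 <= d x y,
      forall x y, d x y = 0 <-> x = y,
      forall x y, d x y = d y x &
      forall x y z, d x z <= d x y + d y z].

Definition bounded_space : Prop := exists B : R, forall x y, d x y <= B.

Definition bounded_subset (K : set M) : Prop :=
  exists B : R, forall x y, K x -> K y -> d x y <= B.

Definition cball (x : M) (r : R) : set M := [set y | d x y <= r].

Definition is_cball (B : set M) : Prop :=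
  exists x r, 0 <= r /\ B = cball x r.

Definition rad_at (x : M) (K : set M) : R := sup [set d x y | y in K].

Definition chebyshev_radius (K : set M) : R := inf [set rad_at x K | x in K].

Definition diam (K : set M) : R :=
  sup [set d p.1 p.2 | p in [set p : M * M | K p.1 /\ K p.2]].

Definition admissible (K : set M) : Prop :=
  bounded_subset K /\
  K = \bigcap_(B in [set B | is_cball B /\ K `<=` B]) B.

Definition admissible_compact : Prop :=
  forall F : set (set M),
    F !=set0 ->
    (forall K, F K -> admissible K /\ K !=set0) ->
    (forall K L, F K -> F L -> K `<=` L \/ L `<=` K) ->
    \bigcap_(K in F) K !=set0.

Definition admissible_normal : Prop :=
  forall K, admissible K -> 0 < diam K -> chebyshev_radius K < diam K.

Definition diminishes_radius (T : M -> M) : Prop :=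
  forall A, admissible A -> T @` A `<=` A ->
    forall x, rad_at (T x) (T @` A) <= rad_at x A.

End MetricDefs.

From mathcomp Require Import all_boot all_order all_algebra.
From mathcomp Require Import boolp classical_sets reals.
Import Order.TTheory GRing.Theory Num.Theory.
Local Open Scope classical_set_scope.
Local Open Scope ring_scope.

(* Zorn's lemma and the compactness of A(M) give a minimal nonempty T-invariant
   admissible set K. Minimality makes K the admissible hull of T(K), and as T
   diminishes radii, the admissible set of points x of K with r_x(K) <= r(K),
   nonempty by compactness, is again T-invariant. Hence it is all of K, i.e.
   δ(K) <= r(K); normal structure forces δ(K) = 0, so K is a fixed point. *)

Lemma ex_minimal_bigcap_closed {T : Type} {P : set (set T)} :
  (forall F, F `<=` P -> total_on F subset -> P (\bigcap_(K in F) K)) ->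
  exists2 K, P K & forall L, P L -> L `<=` K -> K `<=` L.
Proof.
(* Zorn's lemma for unions, applied to complements. *)
move=> capP; have [A [PA Amax]] : exists A, P (~` A) /\
    forall B, A `<` B -> ~ P (~` B).
  apply: Zorn_bigcup => F FP Ftot.
  rewrite setC_bigcup -(bigcap_image F setC id); apply: capP.
    by move=> _ [X FX <-]; exact: FP.
  move=> _ _ [X FX <-] [Y FY <-].
  by have [XY|YX] := Ftot X Y FX FY; [right|left]; exact: subsetC.
exists (~` A) => // L PL LA; rewrite -setCS.
apply: contrapT => AL; apply: (Amax (~` L)); last by rewrite setCK.
by split; [rewrite -setCS setCK | rewrite setCK in AL].
Qed.

Section Admissible.
Context {R : realType} {M : Type} (d : M -> M -> R).

Lemma bigcap_admissible (F : set (set M)) :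
  F !=set0 -> (forall K, F K -> admissible d K) ->
  admissible d (\bigcap_(K in F) K).
Proof.
move=> [K0 FK0] admF; split.
  have [[B hB] _] := admF K0 FK0.
  by exists B => x y hx hy; apply: hB; [exact: hx|exact: hy].
apply/seteqP; split=> [y hy B [_] | y hy K FK]; first exact.
have [_ ->] := admF K FK.
by move=> B [cB KB]; apply: hy; split=> // z hz; apply: KB; exact: hz.
Qed.

Definition ahull (S : set M) : set M :=
  \bigcap_(B in [set B | is_cball d B /\ S `<=` B]) B.

Lemma sub_ahull (S : set M) : S `<=` ahull S.
Proof. by move=> x Sx B [_]; apply. Qed.

Lemma ahull_sub (S K : set M) : admissible d K -> S `<=` K -> ahull S `<=` K.
Proof.
move=> [_ KE] SK x hx; rewrite KE => B [cB KB].
by apply: hx; split=> //; exact: subset_trans SK KB.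
Qed.

Hypothesis dm : is_metric d.

Lemma cball_admissible (x : M) (r : R) : 0 <= r -> admissible d (cball d x r).
Proof.
case: dm => _ _ dC dT r0; split.
  exists (r + r) => y z /= hy hz.
  by apply: le_trans (dT y x z) _; rewrite dC; exact: lerD.
apply/seteqP; split=> [y hy B [_] | y]; first exact.
by apply; split=> //; exists x, r.
Qed.

Lemma is_cball_admissible (B : set M) : is_cball d B -> admissible d B.
Proof. by move=> [x [r [r0 ->]]]; exact: cball_admissible. Qed.

Hypothesis dB : bounded_space d.

Lemma is_cball_setT : M -> is_cball d [set: M].
Proof.
case: dB => B hB x0; have [d0 _ _ _] := dm.
exists x0, B; split; first exact: le_trans (d0 x0 x0) (hB x0 x0).
by apply/seteqP; split=> y // _; exact: hB.
Qed.

Lemma ahull_admissible (S : set M) : M -> admissible d (ahull S).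
Proof.
move=> x0; apply: bigcap_admissible.
  by exists setT; split=> //; exact: is_cball_setT.
by move=> B [cB _]; exact: is_cball_admissible.
Qed.

Lemma le_rad_at {x y : M} {S : set M} : S y -> d x y <= rad_at d x S.
Proof.
case: dB => B hB Sy; apply: ub_le_sup; last by exists y.
by exists B => _ [w _ <-]; exact: hB.
Qed.

Lemma rad_at_le (x : M) (S : set M) (s : R) : S !=set0 ->
  (forall y, S y -> d x y <= s) -> rad_at d x S <= s.
Proof.
move=> [y0 Sy0] hs; apply: ge_sup; first by exists (d x y0), y0.
by move=> _ [w Sw <-]; exact: hs.
Qed.

Lemma chebyshev_radius_ge0 {K : set M} : K !=set0 -> 0 <= chebyshev_radius d K.
Proof.
have [d0 _ _ _] := dm; move=> [k0 Kk0]; apply: lb_le_inf.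
  by exists (rad_at d k0 K), k0.
by move=> _ [x Kx <-]; apply: le_trans (d0 x k0) _; exact: le_rad_at.
Qed.

Lemma le_diam {K : set M} {x y : M} : K x -> K y -> d x y <= diam d K.
Proof.
case: dB => B hB Kx Ky; apply: ub_le_sup; last by exists (x, y).
by exists B => _ [[p q] _ <-]; exact: hB.
Qed.

Lemma diam_le (K : set M) (s : R) : K !=set0 ->
  (forall x y, K x -> K y -> d x y <= s) -> diam d K <= s.
Proof.
move=> [k0 Kk0] hs; apply: ge_sup; first by exists (d k0 k0), (k0, k0).
by move=> _ [[p q] [Kp Kq] <-]; exact: hs.
Qed.

Definition centers (K : set M) (s : R) : set M :=
  K `&` [set x | forall y, K y -> d x y <= s].

Lemma centers_admissible (K : set M) (s : R) :
  admissible d K -> 0 <= s -> admissible d (centers K s).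
Proof.
have [_ _ dC _] := dm; move=> admK s0.
pose F := [set L | L = K \/ exists2 y, K y & L = cball d y s].
have -> : centers K s = \bigcap_(L in F) L.
  apply/seteqP; split=> [x [Kx hx] L [->|[y Ky ->]] // | x hx].
    by rewrite /cball /= dC; exact: hx.
  split; first by apply: hx; left.
  by move=> y Ky; rewrite dC; apply: (hx (cball d y s)); right; exists y.
apply: bigcap_admissible; first by exists K; left.
by move=> L [->|[y Ky ->]] //; exact: cball_admissible.
Qed.

Lemma centers_le (K : set M) (s t : R) : s <= t -> centers K s `<=` centers K t.
Proof.
by move=> st x [Kx hx]; split=> // y Ky; exact: le_trans (hx y Ky) st.
Qed.

(* Compactness applied to the chain of centres at radii s > r(K). *)
Lemma centers_chebyshev_radius_neq0 {K : set M} :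
  admissible_compact d -> admissible d K -> K !=set0 ->
  centers K (chebyshev_radius d K) !=set0.
Proof.
move=> compact admK [k0 Kk0]; set r := chebyshev_radius d K.
have r0 : 0 <= r by apply: chebyshev_radius_ge0; exists k0.
pose G := [set centers K s | s in [set s | r < s]].
have GK1 : G (centers K (r + 1)) by exists (r + 1) => //=; rewrite ltrDl.
have [xc hxc] : \bigcap_(C in G) C !=set0.
  apply: compact; first by exists (centers K (r + 1)).
    move=> _ [s /= rs <-]; split.
      by apply: centers_admissible admK _; exact: le_trans r0 (ltW rs).
    have [_ [x Kx <-] lt] : exists2 y, [set rad_at d x K | x in K] y & y < s.
      by apply: inf_lt => //; exists (rad_at d k0 K), k0.
    by exists x; split=> // y Ky; apply: le_trans (ltW lt); exact: le_rad_at.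
  move=> _ _ [s _ <-] [t _ <-].
  by have /orP [st|ts] := le_total s t; [left|right]; exact: centers_le.
exists xc; split; first by have [] := hxc _ GK1.
move=> y Ky; apply/ler_addgt0Pr => e e0.
have GKe : G (centers K (r + e)) by exists (r + e) => //=; rewrite ltrDl.
by have [_] := hxc _ GKe; apply.
Qed.

Lemma diam_le0_eq {K : set M} {x y : M} : K x -> K y -> diam d K <= 0 -> x = y.
Proof.
have [d0 dE _ _] := dm; move=> Kx Ky diam0.
by apply/dE/eqP; rewrite eq_le d0 andbT; exact: le_trans (le_diam Kx Ky) diam0.
Qed.

Lemma diam_le0_of_normal {K : set M} : admissible_normal d -> admissible d K ->
  diam d K <= chebyshev_radius d K -> diam d K <= 0.
Proof.
move=> normal admK diamK; rewrite leNgt; apply/negP => /(normal _ admK).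
by move=> /lt_le_trans /(_ diamK); rewrite ltxx.
Qed.

Section Invariant.
Variable T : M -> M.

Definition invariant_admissible (K : set M) : Prop :=
  [/\ admissible d K, K !=set0 & T @` K `<=` K].

Lemma invariant_admissible_bigcap_chain : M -> admissible_compact d ->
  forall F, F `<=` invariant_admissible -> total_on F subset ->
  invariant_admissible (\bigcap_(K in F) K).
Proof.
move=> x0 compact F FP Ftot.
have [->|F0] := eqVneq F set0.
  rewrite bigcap_set0; split=> //; last by exists x0.
  exact/is_cball_admissible/is_cball_setT.
have {}F0 : F !=set0 by apply/set0P.
split.
- by apply: bigcap_admissible => // K /FP [].
- by apply: compact => // K /FP [].
- move=> _ [z hz <-] K FK; have [_ _ TK] := FP K FK.
  by apply: TK; exists z => //; exact: hz.
Qed.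

Lemma minimal_invariant_sub_ahull {K : set M} : invariant_admissible K ->
  (forall L, invariant_admissible L -> L `<=` K -> K `<=` L) ->
  K `<=` ahull (T @` K).
Proof.
move=> [admK [k0 Kk0] TK] minK; apply: minK; last exact: ahull_sub.
split; first exact: ahull_admissible.
  by exists (T k0); apply: sub_ahull; exact: imageP.
by move=> _ [z hz <-]; apply: sub_ahull; apply: imageP; exact: ahull_sub hz.
Qed.

Hypothesis dimT : diminishes_radius d T.

(* [r_{Tz}(T K) <= r_z(K) <= s] puts [T K], hence its admissible hull [K], in
   the ball [B(Tz, s)]. *)
Lemma centers_invariant {K : set M} {s : R} :
  invariant_admissible K -> K `<=` ahull (T @` K) -> 0 <= s ->
  centers K s !=set0 -> invariant_admissible (centers K s).
Proof.
move=> [admK K0 TK] Khull s0 C0; split=> //; first exact: centers_admissible.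
move=> _ [z [Kz hz] <-]; split; first by apply: TK; exists z.
move=> y Ky; apply: (Khull y Ky (cball d (T z) s)).
split; first by exists (T z), s.
move=> _ [u Ku <-]; apply: le_trans (le_rad_at (imageP T Ku)) _.
by apply: le_trans (dimT K admK TK z) _; exact: rad_at_le.
Qed.

End Invariant.
End Admissible.

Theorem theorem2p2 (R : realType) (M : Type) (d : M -> M -> R) (T : M -> M) :
  is_metric d -> (exists x0 : M, True) -> bounded_space d ->
  admissible_compact d -> admissible_normal d -> diminishes_radius d T ->
  exists x : M, T x = x.
Proof.
move=> dm [x0 _] dB compact normal dimT.
have [K invK minK] := ex_minimal_bigcap_closed
  (invariant_admissible_bigcap_chain d dm dB T x0 compact).
have [admK K0 TK] := invK.
have Khull := minimal_invariant_sub_ahull d dm dB T invK minK.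
have C0 := centers_chebyshev_radius_neq0 d dm dB compact admK K0.
have invC := centers_invariant d dm dB T dimT invK Khull
  (chebyshev_radius_ge0 d dm dB K0) C0.
have KC : K `<=` centers d K (chebyshev_radius d K).
  exact: minK _ invC (@subIsetl _ _ _).
have diamK : diam d K <= chebyshev_radius d K.
  by apply: (diam_le d K _ K0) => x y Kx Ky; exact: (KC x Kx).2.
have [k0 Kk0] := K0.
have diam0 := diam_le0_of_normal d normal admK diamK.
exists k0; apply: (diam_le0_eq d dm dB _ Kk0 diam0).
exact: TK (imageP T Kk0).
Qed.
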